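(* Let $n,T\in\mathbb{N}$ and let real numbers $r_{it}$, $i\in\{1,\ldots,n\}$, $t\in\{1,\ldots,T\}$, be given. Consider the random return vector $\boldsymbol{r}=(r_1,\ldots,r_n)^{\mathsf T}$ which takes the value $(r_{1t},\ldots,r_{nt})^{\mathsf T}$ in scenario $t$, each scenario $t\in\{1,\ldots,T\}$ having probability $1/T$, and let $\mu_i=\frac1T\sum_{t=1}^T r_{it}$, $\boldsymbol{\mu}=(\mu_1,\ldots,\mu_n)^{\mathsf T}$. Define the convex function $\mathrm{MAD}:\mathbb{R}^n\to\mathbb{R}$ by $$\mathrm{MAD}(\boldsymbol{x})=\mathbb{E}\big[|(\boldsymbol{r}-\boldsymbol{\mu})^{\mathsf T}\boldsymbol{x}|\big]=\frac1T\sum_{t=1}^T\Big|\sum_{i=1}^n (r_{it}-\mu_i)x_i\Big|,$$ and let $\partial\mathrm{MAD}(\boldsymbol{x})$ denote its (convex-analysis) subdifferential at $\boldsymbol{x}$. Let $\Delta^{n-1}=\{\boldsymbol{x}\in\mathbb{R}^n: x_i\ge0\ \forall i,\ \sum_i x_i=1\}$. Call $\boldsymbol{x}\in\Delta^{n-1}$ a MAD-RP portfolio if there exist $\boldsymbol{s}\in\partial\mathrm{MAD}(\boldsymbol{x})$ and $\lambda\in\mathbb{R}$ such that $x_i s_i=\lambda$ for all $i\in\{1,\ldots,n\}$ (i.e. there is a vector in $\{\boldsymbol{x}\cdot\boldsymbol{s}:\boldsymbol{s}\in\partial\mathrm{MAD}(\boldsymbol{x})\}$, $\cdot$ the componentwise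 product, all of whose components are equal). Suppose that the only vector $\boldsymbol{x}\in\mathbb{R}^n_+$ such that $(\boldsymbol{r}-\boldsymbol{\mu})^{\mathsf T}\boldsymbol{x}=0$ holds almost surely (i.e. $\sum_{i}(r_{it}-\mu_i)x_i=0$ for every $t$) is $\boldsymbol{x}=0$. Then there exists a unique MAD-RP portfolio.
   Context: $\mathbb{R}^n_+$ denotes the set of vectors in $\mathbb{R}^n$ with all components nonnegative. *)

From HB Require Import structures.
From mathcomp Require Import all_boot all_order all_algebra.
From mathcomp Require Import reals.
Set Implicit Arguments. Unset Strict Implicit. Unset Printing Implicit Defensive.
Import Order.TTheory GRing.Theory Num.Theory.
Local Open Scope ring_scope.

Section MAD.
Variables (R : realType) (n T : nat) (r : 'I_n -> 'I_T -> R).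

Definition mu (i : 'I_n) : R := (T%:R)^-1 * \sum_(t < T) r i t.

Definition MAD (x : 'I_n -> R) : R :=
  (T%:R)^-1 * \sum_(t < T) `| \sum_(i < n) (r i t - mu i) * x i |.

Definition subgradient (f : ('I_n -> R) -> R) (x s : 'I_n -> R) : Prop :=
  forall y : 'I_n -> R, f x + \sum_(i < n) s i * (y i - x i) <= f y.

Definition in_simplex (x : 'I_n -> R) : Prop :=
  (forall i, 0 <= x i) /\ \sum_(i < n) x i = 1.

Definition MAD_RP (x : 'I_n -> R) : Prop :=
  in_simplex x /\
  exists (s : 'I_n -> R) (lam : R), subgradient MAD x s /\ forall i, x i * s i = lam.

End MAD.

From HB Require Import structures.
From mathcomp Require Import all_boot all_order all_algebra.
From mathcomp Require Import all_classical all_reals all_analysis.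
From mathcomp Require Import ring lra.
Set Implicit Arguments. Unset Strict Implicit. Unset Printing Implicit Defensive.
Import Order.TTheory GRing.Theory Num.Theory.
Import numFieldNormedType.Exports.
Local Open Scope ring_scope.

(* MAD is sublinear, continuous and positive on the simplex, so
   MAD w >= m * sum_i w_i on the nonnegative orthant for some m > 0.  Hence the
   log-barrier F w = MAD w - sum_i ln w_i is coercive on the open orthant and
   attains its minimum at some y > 0.  The first-order condition at y says that
   (1 / y_i)_i is a subgradient of MAD at y; by positive homogeneity it is also
   one at x = y / sum_i y_i, where x_i * (1 / y_i) = 1 / sum_i y_i for all i.  For a positively homogeneous f, s is a subgradient at x iff
   s.x = f x and s.z <= f z for every z.  If x and x' are risk-parity points
   with common contributions lam and lam', testing each subgradient inequality
   at the other point gives sum_i a_i <= n and sum_i 1 / a_i <= n for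
   a_i = lam x'_i / (lam' x_i), which forces every a_i = 1, so x' = x. *)

Lemma ler_sum_single (R : numDomainType) (I : finType) (F : I -> R) i :
  (forall j, 0 <= F j) -> F i <= \sum_j F j.
Proof. by move=> F0; rewrite (bigD1 i) //= lerDl sumr_ge0. Qed.

Lemma continuous_sum (R : numFieldType) (X : topologicalType) (I : Type)
    (s : seq I) (F : I -> X -> R) x :
  (forall i, {for x, continuous (F i)}) ->
  {for x, continuous (fun v => \sum_(i <- s) F i v)}.
Proof.
move=> F_cont; elim: s => [|a s IHs].
  have -> : (fun v => \sum_(i <- [::]) F i v) = fun _ => 0.
    by apply/funext => v; rewrite big_nil.
  exact: cst_continuous.
have -> : (fun v => \sum_(i <- a :: s) F i v) =
          F a + fun v => \sum_(i <- s) F i v.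
  by apply/funext => v; rewrite big_cons.
exact: continuousD.
Qed.

Lemma ln_le_mul_sub (R : realType) (a u : R) : 0 < a -> 0 < u ->
  ln u <= a * u - 1 - ln a.
Proof.
move=> a0 u0; have au0 : 0 < a * u by rewrite mulr_gt0.
have := @le_ln1Dx R (a * u - 1); rewrite addrCA subrr addr0 lnM ?posrE //.
by move=> /(_ ltac:(lra)); lra.
Qed.

Lemma mul_sub_ln_bounded (R : realType) (m B : R) : 0 < m ->
  exists2 eps, 0 < eps & exists M,
    forall u, 0 < u -> m * u - ln u <= B -> eps <= u <= M.
Proof.
move=> m0; have m2 : 0 < m / 2 by rewrite divr_gt0.
exists (expR (- B)); first exact: expR_gt0.
exists (2 / m * (B - 1 - ln (m / 2))) => u u0 uB; apply/andP; split.
  rewrite -[u in _ <= u]lnK ?posrE // ler_expR.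
  have : 0 <= m * u by rewrite mulr_ge0 // ltW.
  lra.
have := ln_le_mul_sub m2 u0 => ln_le.
rewrite [u in u <= _](_ : u = 2 / m * (m / 2 * u)); last by field; rewrite gt_eqF.
apply: ler_wpM2l; [by rewrite divr_ge0 // ltW | lra].
Qed.

Lemma row_ord0K (R : Type) n (w : 'I_n -> R) : (\row_i w i) ord0 = w.
Proof. by apply/funext => i; rewrite mxE. Qed.

Lemma ln_sub_ge (R : realType) (y w : R) : 0 < y -> y / 2 <= w ->
  (w - y) / y - 2 * (w - y) ^+ 2 / y ^+ 2 <= ln w - ln y.
Proof.
move=> y0 w2; have w0 : 0 < w by apply: lt_le_trans w2; rewrite divr_gt0.
have tangent : ln (y / w) <= y / w - 1.
  have := @le_ln1Dx R (y / w - 1); rewrite addrCA subrr addr0; apply.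
  have : 0 < y / w by rewrite divr_gt0.
  lra.
rewrite ln_div ?posrE // in tangent.
have gap : (w - y) / w - ((w - y) / y - 2 * (w - y) ^+ 2 / y ^+ 2)
           = (w - y) ^+ 2 * (2 * w - y) / (w * y ^+ 2).
  by field; rewrite !gt_eqF.
have : 0 <= (w - y) ^+ 2 * (2 * w - y) / (w * y ^+ 2).
  apply: divr_ge0; first by rewrite mulr_ge0 ?sqr_ge0 //; lra.
  by rewrite mulr_ge0 ?sqr_ge0 ?ltW.
rewrite -gap (_ : (w - y) / w = 1 - y / w); first lra.
by field; rewrite gt_eqF.
Qed.

Lemma ler_of_le_addr_small (R : realFieldType) (a b c t0 : R) : 0 < t0 ->
  (forall t, 0 < t <= t0 -> a <= b + t * c) -> a <= b.
Proof.
move=> t00 small; apply/ler_addgt0Pr => e e0.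
pose t := Num.min t0 (e / (`|c| + 1)).
have c1 : 0 < `|c| + 1 by rewrite ltr_wpDl.
have t_gt0 : 0 < t by rewrite lt_min t00 divr_gt0.
have te : t * (`|c| + 1) <= e by rewrite -ler_pdivlMr // ge_min lexx orbT.
have := small t; rewrite t_gt0 ge_min lexx => /(_ isT).
have := ler_norm c; nra.
Qed.

Lemma eq1_of_sum_le_sum_inv_le (R : realFieldType) n (a : 'I_n -> R) :
  (forall i, 0 < a i) -> \sum_i a i <= n%:R -> \sum_i (a i)^-1 <= n%:R ->
  forall i, a i = 1.
Proof.
move=> a_gt0 sum_a sum_inv.
have sq i : a i + (a i)^-1 - 2 = (a i - 1) ^+ 2 / a i by field; rewrite gt_eqF.
have term_ge0 i : 0 <= a i + (a i)^-1 - 2 by rewrite sq divr_ge0 ?sqr_ge0 ?ltW.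
have sum0 : \sum_i (a i + (a i)^-1 - 2) = 0.
  apply/eqP; rewrite eq_le sumr_ge0 ?andbT // sumrB big_split /=.
  by rewrite sumr_const card_ord -mulr_natr; lra.
move=> i; have /(_ i isT) := psumr_eq0P (fun j _ => term_ge0 j) sum0.
rewrite sq => /eqP; rewrite mulf_eq0 invr_eq0 (gt_eqF (a_gt0 i)) orbF sqrf_eq0.
by rewrite subr_eq0 => /eqP.
Qed.

Section Sublinear.
Variables (R : realType) (n : nat) (f : ('I_n -> R) -> R).
Hypothesis f_homo : forall (c : R) x, 0 <= c -> f (fun i => c * x i) = c * f x.

Lemma sublinear_convex :
  (forall x y, f (fun i => x i + y i) <= f x + f y) ->
  forall x z (t : R), 0 <= t <= 1 ->
  f (fun i => (1 - t) * x i + t * z i) <= (1 - t) * f x + t * f z.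
Proof.
move=> f_subadd x z t /andP[t0 t1].
by rewrite -!f_homo ?subr_ge0 //; apply: f_subadd.
Qed.

Lemma subgradient_homogeneousP x s : subgradient f x s <->
  \sum_i s i * x i = f x /\ forall z, \sum_i s i * z i <= f z.
Proof.
have dotB z : \sum_i s i * (z i - x i) = \sum_i s i * z i - \sum_i s i * x i.
  by rewrite -sumrB; apply: eq_bigr => i _; rewrite mulrBr.
split=> [sg | [sx sz] z]; last by rewrite dotB sx addrCA subrr addr0.
have sx : \sum_i s i * x i = f x.
  have := sg (fun i => 0 * x i); have := sg (fun i => 2 * x i).
  rewrite !dotB !f_homo ?ler0n //.
  have -> : \sum_i s i * (0 * x i) = 0 by rewrite big1 // => i _; rewrite mul0r mulr0.
  have -> : \sum_i s i * (2 * x i) = 2 * \sum_i s i * x i.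
    by rewrite mulr_sumr; apply: eq_bigr => i _; rewrite mulrCA.
  lra.
by split=> // z; have := sg z; rewrite dotB sx addrCA subrr addr0.
Qed.

Lemma subgradient_scale c x s : 0 <= c ->
  subgradient f x s -> subgradient f (fun i => c * x i) s.
Proof.
move=> c0 /subgradient_homogeneousP[sx sz]; apply/subgradient_homogeneousP; split=> //.
by rewrite f_homo // -sx mulr_sumr; apply: eq_bigr => i _; rewrite mulrCA.
Qed.

End Sublinear.

Section SublinearLowerBound.
Local Open Scope classical_set_scope.
Variables (R : realType) (n : nat) (f : ('I_n -> R) -> R).
Hypothesis f_homo : forall (c : R) x, 0 <= c -> f (fun i => c * x i) = c * f x.
Hypothesis f_cont : continuous (fun v : 'rV[R]_n => f (v ord0)).
Hypothesis f_pos : forall x, in_simplex x -> 0 < f x.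
Hypothesis n_gt0 : (0 < n)%N.

Lemma sublinear_ge_sum : exists2 m, 0 < m &
  forall w, (forall i, 0 <= w i) -> m * \sum_i w i <= f w.
Proof.
(* m is the minimum of f over the simplex, a compact subset of 'rV_n. *)
pose B := [set v : 'rV[R]_n | forall i, (fun _ => `[0, 1]) i (v ord0 i)].
pose C := [set v : 'rV[R]_n | \sum_i v ord0 i = 1].
have simplex_BC x : in_simplex x -> (B `&` C) (\row_i x i).
  move=> [x_ge0 x1]; rewrite /B /C /= row_ord0K; split=> // i.
  by rewrite in_itv /= x_ge0 -x1 (ler_sum_single i x_ge0).
have BC_simplex v : (B `&` C) v -> in_simplex (v ord0).
  by move=> [v01 v1]; split=> // i; have := v01 i; rewrite /= in_itv /= => /andP[].
have BC_compact : compact (B `&` C).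
  apply: compact_closedI; first by apply: rV_compact => i; exact: segment_compact.
  have -> : C = (fun v : 'rV[R]_n => \sum_i v ord0 i) @^-1` [set 1] by [].
  apply: preimage_closed; last exact: closed_eq.
  by move=> v _; apply: continuous_sum => i; exact: coord_continuous.
have BC_ne : (B `&` C) !=set0.
  exists (\row_i (n%:R)^-1); apply: simplex_BC; split=> [i|].
    by rewrite invr_ge0 ler0n.
  by rewrite sumr_const card_ord -[_ *+ n]mulr_natr mulVf // pnatr_eq0 -lt0n.
have [c /set_mem BCc c_min] :=
  compact_EVT_min BC_ne BC_compact (continuous_subspaceT f_cont).
exists (f (c ord0)); first exact/f_pos/BC_simplex/BCc.
move=> w w_ge0; have [S0|S_gt0] := eqVneq (\sum_i w i) 0.
  have w0 i : w i = 0 by apply: (psumr_eq0P (fun j _ => w_ge0 j) S0).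
  rewrite S0 mulr0 (_ : w = fun i => 0 * w i) ?f_homo ?mul0r //.
  by apply/funext => i; rewrite w0 mul0r.
have {}S_gt0 : 0 < \sum_i w i by rewrite lt_def S_gt0 sumr_ge0.
have := c_min (\row_i ((\sum_j w j)^-1 * w i)).
rewrite row_ord0K f_homo; last by rewrite invr_ge0 ltW.
rewrite ler_pdivlMl // mulrC; apply.
apply/mem_set/simplex_BC; split=> [i|]; first by rewrite mulr_ge0 // invr_ge0 ltW.
by rewrite -mulr_sumr mulVf ?gt_eqF.
Qed.

End SublinearLowerBound.

Section LogBarrier.
Variables (R : realType) (n : nat) (f : ('I_n -> R) -> R).
Hypothesis f_convex : forall x z (t : R), 0 <= t <= 1 ->
  f (fun i => (1 - t) * x i + t * z i) <= (1 - t) * f x + t * f z.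

Definition log_barrier (w : 'I_n -> R) : R := f w - \sum_i ln (w i).

Variable y : 'I_n -> R.
Hypothesis y_gt0 : forall i, 0 < y i.
Hypothesis y_min : forall w, (forall i, 0 < w i) -> log_barrier y <= log_barrier w.

Lemma log_barrier_min_step z t : 0 < t <= 1 ->
  (forall i, y i / 2 <= y i + t * (z i - y i)) ->
  f y + \sum_i (y i)^-1 * (z i - y i) <=
  f z + t * \sum_i 2 * (z i - y i) ^+ 2 / y i ^+ 2.
Proof.
move=> /andP[t0 t1] near_y; pose w i := y i + t * (z i - y i).
have w_gt0 i : 0 < w i by apply: lt_le_trans (near_y i); rewrite divr_gt0.
have conv : f w <= (1 - t) * f y + t * f z.
  have -> : w = (fun i => (1 - t) * y i + t * z i).
    by apply: funext => i; rewrite /w; ring.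
  by apply: f_convex; rewrite (ltW t0) t1.
have ln_gain : t * \sum_i (y i)^-1 * (z i - y i)
    - t ^+ 2 * \sum_i 2 * (z i - y i) ^+ 2 / y i ^+ 2
    <= \sum_i ln (w i) - \sum_i ln (y i).
  rewrite !mulr_sumr -!sumrB; apply: ler_sum => i _.
  have := ln_sub_ge (y_gt0 i) (near_y i); rewrite /w addrAC subrr add0r.
  by congr (_ <= _); field; rewrite gt_eqF.
have := y_min w_gt0; rewrite /log_barrier => min_w.
have : t * (f y + \sum_i (y i)^-1 * (z i - y i)
            - f z - t * \sum_i 2 * (z i - y i) ^+ 2 / y i ^+ 2) <= 0.
  by move: ln_gain; rewrite expr2; lra.
by rewrite pmulr_rle0 //; lra.
Qed.

Lemma log_barrier_min_subgradient : subgradient f y (fun i => (y i)^-1).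
Proof.
move=> z; pose K := \sum_i `|z i - y i| / y i.
have K_ge0 : 0 <= K by apply: sumr_ge0 => i _; rewrite divr_ge0 // ltW.
(* For 0 < t <= t0, the point y + t (z - y) stays above y / 2. *)
pose t0 := (2 * (1 + K))^-1.
have t0_gt0 : 0 < t0 by rewrite invr_gt0; lra.
have t0K : t0 * (2 * (1 + K)) = 1 by rewrite mulVf //; apply: lt0r_neq0; lra.
apply: (ler_of_le_addr_small t0_gt0) => t /andP[t_gt0 t_le].
have tK : t * K <= 1 / 2 by nra.
apply: log_barrier_min_step => [|i]; first by rewrite t_gt0 /=; nra.
have : `|z i - y i| <= K * y i.
  by rewrite -ler_pdivrMr //; apply: ler_sum_single => j; rewrite divr_ge0 // ltW.
have := ler_norm (y i - z i); rewrite distrC.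
have := y_gt0 i; nra.
Qed.

End LogBarrier.

Section LogBarrierMinimum.
Local Open Scope classical_set_scope.
Variables (R : realType) (n : nat) (f : ('I_n -> R) -> R).
Hypothesis f_cont : continuous (fun v : 'rV[R]_n => f (v ord0)).
Variable m : R.
Hypothesis m_gt0 : 0 < m.
Hypothesis f_ge : forall w, (forall i, 0 <= w i) -> m * \sum_i w i <= f w.

Lemma log_barrier_sublevel_bounded B : exists2 eps, 0 < eps & exists M,
  forall w, (forall i, 0 < w i) -> log_barrier f w <= B ->
  forall i, eps <= w i <= M.
Proof.
pose L := 1 + ln m.
have [eps eps_gt0 [M bounded]] := mul_sub_ln_bounded (B - n%:R * L + L) m_gt0.
exists eps => //; exists M => w w_gt0 wB i; apply: bounded => //.
have L_le j : 0 <= m * w j - ln (w j) - L.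
  by have := ln_le_mul_sub m_gt0 (w_gt0 j); rewrite /L; lra.
have := ler_sum_single i L_le.
rewrite sumrB sumr_const card_ord -mulr_natl sumrB -mulr_sumr.
have := f_ge (fun j => ltW (w_gt0 j)); move: wB; rewrite /log_barrier; lra.
Qed.

Lemma log_barrier_has_min : exists2 y, (forall i, 0 < y i) &
  forall w, (forall i, 0 < w i) -> log_barrier f y <= log_barrier f w.
Proof.
pose one := fun _ : 'I_n => 1 : R.
have [eps eps_gt0 [M box]] := log_barrier_sublevel_bounded (log_barrier f one).
pose K := [set v : 'rV[R]_n | forall i, (fun _ => `[eps, M]) i (v ord0 i)].
have inK w : (forall i, 0 < w i) -> log_barrier f w <= log_barrier f one ->
    K (\row_i w i).
  by move=> w_gt0 wle i /=; rewrite row_ord0K in_itv /=; apply: box.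
have K_gt0 v : K v -> forall i, 0 < v ord0 i.
  by move=> Kv i; have := Kv i; rewrite /= in_itv /= => /andP[/(lt_le_trans eps_gt0)].
have K_ne : K !=set0 by exists (\row_i one i); apply: inK => // i; rewrite ltr01.
have K_compact : compact K by apply: rV_compact => i; exact: segment_compact.
have K_cont : {within K, continuous (fun v => log_barrier f (v ord0))}.
  apply: continuous_in_subspaceT => v /set_mem Kv.
  have -> : (fun v : 'rV[R]_n => log_barrier f (v ord0)) =
            (fun v => f (v ord0)) - (fun v => \sum_i ln (v ord0 i)) by [].
  apply: continuousB; first exact: f_cont.
  apply: continuous_sum => i; apply: continuous_comp; first exact: coord_continuous.
  exact: continuous_ln (K_gt0 v Kv i).
have [c /set_mem Kc c_min] := compact_EVT_min K_ne K_compact K_cont.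
exists (c ord0); first exact: K_gt0 Kc.
have c_le_one : log_barrier f (c ord0) <= log_barrier f one.
  by have := c_min (\row_i one i); rewrite row_ord0K; apply; apply/mem_set; apply: inK.
move=> w w_gt0; have [w_le|/ltW] := lerP (log_barrier f w) (log_barrier f one).
  by have := c_min (\row_i w i); rewrite row_ord0K; apply; apply/mem_set; apply: inK.
exact: le_trans.
Qed.

End LogBarrierMinimum.

(* [MAD_RP r] is [risk_parity (MAD r)]. *)
Definition risk_parity (R : realType) (n : nat) (f : ('I_n -> R) -> R)
    (x : 'I_n -> R) : Prop :=
  in_simplex x /\
  exists (s : 'I_n -> R) (lam : R), subgradient f x s /\ forall i, x i * s i = lam.

Section RiskParity.
Variables (R : realType) (n : nat) (f : ('I_n -> R) -> R).
Hypothesis f_homo : forall (c : R) x, 0 <= c -> f (fun i => c * x i) = c * f x.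
Hypothesis f_pos : forall x, in_simplex x -> 0 < f x.

Lemma risk_parityP x : risk_parity f x ->
  (forall i, 0 < x i) /\
  exists2 lam, 0 < lam & f x = lam * n%:R /\ forall z, lam * \sum_i z i / x i <= f z.
Proof.
move=> [x_simplex [s [lam [/(subgradient_homogeneousP f_homo)[sx sz] xs]]]].
have fx : f x = lam * n%:R.
  rewrite -sx (eq_bigr (fun=> lam)) => [|i _]; last by rewrite mulrC xs.
  by rewrite sumr_const card_ord mulr_natr.
have lam_gt0 : 0 < lam by have := f_pos x_simplex; rewrite fx; have := ler0n R n; nra.
have x_gt0 i : 0 < x i.
  rewrite lt_def x_simplex.1 andbT; apply: contraTneq lam_gt0 => xi0.
  by rewrite -(xs i) xi0 mul0r ltxx.
split=> //; exists lam => //; split=> // z.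
suff -> : lam * \sum_i z i / x i = \sum_i s i * z i by exact: sz.
by rewrite mulr_sumr; apply: eq_bigr => i _; rewrite -(xs i); field; rewrite gt_eqF.
Qed.

Lemma risk_parity_unique x x' : risk_parity f x -> risk_parity f x' ->
  forall i, x' i = x i.
Proof.
move=> rp_x rp_x'; have x1 := rp_x.1.2; have x'1 := rp_x'.1.2.
have [x_gt0 [lam lam_gt0 [fx x_sub]]] := risk_parityP rp_x.
have [x'_gt0 [lam' lam'_gt0 [fx' x'_sub]]] := risk_parityP rp_x'.
have sum_ratio_le (u v : 'I_n -> R) mu nu : (forall i, 0 < u i) -> 0 < nu ->
    f v = nu * n%:R -> (forall z, mu * \sum_i z i / u i <= f z) ->
    \sum_i mu * v i / (nu * u i) <= n%:R.
  move=> u_gt0 nu_gt0 fv u_sub.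
  have -> : \sum_i mu * v i / (nu * u i) = mu * (\sum_i v i / u i) / nu.
    by rewrite mulr_sumr mulr_suml; apply: eq_bigr => i _; field; rewrite !gt_eqF.
  by rewrite ler_pdivrMr // [n%:R * _]mulrC -fv.
pose a i := lam * x' i / (lam' * x i).
have a_gt0 i : 0 < a i by rewrite divr_gt0 ?mulr_gt0.
have a1 : forall i, a i = 1.
  apply: eq1_of_sum_le_sum_inv_le => //; first exact: sum_ratio_le.
  under eq_bigr do rewrite invf_div; exact: sum_ratio_le.
have prop i : lam * x' i = lam' * x i := divr1_eq (a1 i).
have lam_eq : lam = lam'.
  by rewrite -[lam]mulr1 -x'1 mulr_sumr (eq_bigr _ (fun i _ => prop i)) -mulr_sumr x1 mulr1.
by move=> i; apply: (mulfI (lt0r_neq0 lam_gt0)); rewrite prop lam_eq.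
Qed.

Lemma risk_parity_of_inv_subgradient y : (0 < n)%N -> (forall i, 0 < y i) ->
  subgradient f y (fun i => (y i)^-1) ->
  risk_parity f (fun i => (\sum_j y j)^-1 * y i).
Proof.
move=> n_gt0 y_gt0 y_sub; pose S := \sum_j y j.
have S_gt0 : 0 < S.
  apply: lt_le_trans (y_gt0 (Ordinal n_gt0)) _.
  exact: ler_sum_single (fun j => ltW (y_gt0 j)).
have S_inv_ge0 : 0 <= S^-1 by rewrite invr_ge0 ltW.
split; first split=> [i|]; first by rewrite mulr_ge0 // ltW.
  by rewrite -mulr_sumr mulVf ?gt_eqF.
exists (fun i => (y i)^-1), S^-1; split; first exact: subgradient_scale.
by move=> i; rewrite -mulrA mulfV ?mulr1 // gt_eqF.
Qed.

End RiskParity.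

Theorem risk_parity_exists_unique (R : realType) (n : nat) (f : ('I_n -> R) -> R) :
  (0 < n)%N ->
  (forall (c : R) x, 0 <= c -> f (fun i => c * x i) = c * f x) ->
  (forall x y, f (fun i => x i + y i) <= f x + f y) ->
  continuous (fun v : 'rV[R]_n => f (v ord0)) ->
  (forall x, in_simplex x -> 0 < f x) ->
  exists x, risk_parity f x /\ forall y, risk_parity f y -> forall i, y i = x i.
Proof.
move=> n_gt0 f_homo f_subadd f_cont f_pos.
have [m m_gt0 f_ge] := sublinear_ge_sum f_homo f_cont f_pos n_gt0.
have [y y_gt0 y_min] := log_barrier_has_min f_cont m_gt0 f_ge.
have y_sub := log_barrier_min_subgradient (sublinear_convex f_homo f_subadd) y_gt0 y_min.
have rp_y := risk_parity_of_inv_subgradient f_homo n_gt0 y_gt0 y_sub.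
exists (fun i => (\sum_j y j)^-1 * y i); split=> // x.
exact: risk_parity_unique f_homo f_pos _ _ rp_y.
Qed.

Section MeanAbsoluteDeviation.
Variables (R : realType) (n T : nat) (r : 'I_n -> 'I_T -> R).

Lemma MAD_ge0 x : 0 <= MAD r x.
Proof. by rewrite mulr_ge0 ?invr_ge0 ?ler0n ?sumr_ge0. Qed.

Lemma MAD_homo (c : R) x : 0 <= c -> MAD r (fun i => c * x i) = c * MAD r x.
Proof.
move=> c_ge0; rewrite /MAD [RHS]mulrCA [in RHS]mulr_sumr; congr (_ * _).
apply: eq_bigr => t _.
rewrite -[c in RHS]ger0_norm // -normrM mulr_sumr.
by congr `|_|; apply: eq_bigr => i _; rewrite mulrCA.
Qed.

Lemma MAD_subadd x y : MAD r (fun i => x i + y i) <= MAD r x + MAD r y.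
Proof.
rewrite /MAD -mulrDr ler_wpM2l ?invr_ge0 ?ler0n // -big_split /=.
apply: ler_sum => t _; apply: le_trans (ler_normD _ _); rewrite -big_split /=.
by under eq_bigr do rewrite mulrDr.
Qed.

Lemma MAD_continuous : continuous (fun v : 'rV[R]_n => MAD r (v ord0)).
Proof.
move=> v; have mulr_cont (c : R) (g : 'rV[R]_n -> R) : {for v, continuous g} ->
    {for v, continuous (fun u => c * g u)}.
  by move=> g_cont; apply: continuousM g_cont; exact: cst_continuous.
apply: (mulr_cont); apply: continuous_sum => t.
apply: (continuous_comp (f := fun u : 'rV[R]_n => _)); last exact: norm_continuous.
by apply: continuous_sum => i; apply: mulr_cont; exact: coord_continuous.
Qed.

Lemma MAD_gt0 :
  (forall x, (forall i, 0 <= x i) ->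
     (forall t, \sum_(i < n) (r i t - mu r i) * x i = 0) -> forall i, x i = 0) ->
  forall x, in_simplex x -> 0 < MAD r x.
Proof.
move=> degenerate x [x_ge0 x1]; rewrite lt_def MAD_ge0 andbT; apply/eqP => MAD0.
suff x0 : forall i, x i = 0.
  by move: x1; rewrite big1 // => /eqP; rewrite eq_sym oner_eq0.
apply: degenerate => // t; have T_gt0 : (0 < T)%N by apply: leq_ltn_trans (ltn_ord t).
move/eqP: MAD0; rewrite /MAD mulf_eq0 invr_eq0 pnatr_eq0 (gtn_eqF T_gt0) /= => /eqP.
by move/psumr_eq0P => /(_ (fun t _ => normr_ge0 _) t isT)/normr0_eq0.
Qed.

End MeanAbsoluteDeviation.

Theorem proposition2 (R : realType) (n T : nat) (r : 'I_n -> 'I_T -> R) :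
  (0 < n)%N ->
  (forall x : 'I_n -> R, (forall i, 0 <= x i) ->
     (forall t : 'I_T, \sum_(i < n) (r i t - mu r i) * x i = 0) ->
     forall i, x i = 0) ->
  exists x : 'I_n -> R, MAD_RP r x /\
    forall y : 'I_n -> R, MAD_RP r y -> forall i, y i = x i.
Proof.
move=> n_gt0 degenerate; apply: risk_parity_exists_unique => //.
- exact: MAD_homo.
- exact: MAD_subadd.
- exact: MAD_continuous.
- exact: MAD_gt0.
Qed.
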